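(* Let $(\omega,\rho)$ be a linear $\mathrm{SU}(3)$-structure on $\mathbb R^6$ and let $\alpha\in\Lambda^2(\mathbb R^6)^*$. Then \begin{enumerate} \item $\|\alpha\|^2+\big\|\tfrac12\omega^2\wedge\alpha\big\|^2=\|\alpha\wedge\omega\|^2\le 4\|\alpha\|^2$; \item $\|\alpha^3\|^2\le 6\|\alpha\|^6$, \end{enumerate} where $\|\cdot\|$ is the norm on forms induced by the scalar product defined by the $\mathrm{SU}(3)$-structure.
   Context: A linear $\mathrm{SU}(3)$-structure on $\mathbb R^6$ is a pair $(\omega,\rho)$, $\omega\in\Lambda^2(\mathbb R^6)^*$, $\rho\in\Lambda^3(\mathbb R^6)^*$, such that for some basis $\{e^1,\dots,e^6\}$ of $(\mathbb R^6)^*$ one has $\omega=e^{12}+e^{34}+e^{56}$ and $\rho=\mathrm{Re}\big((e^1+ie^2)\wedge(e^3+ie^4)\wedge(e^5+ie^6)\big)$; the induced scalar product is the one making this basis orthonormal, extended to forms so that the $e^{i_1\cdots i_k}$ ($i_1<\dots<i_k$) are orthonormal. *)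

From HB Require Import structures.
From mathcomp Require Import all_boot all_order all_algebra.
Set Implicit Arguments. Unset Strict Implicit. Unset Printing Implicit Defensive.
Import Order.TTheory GRing.Theory Num.Theory.
Local Open Scope ring_scope.

(* A (mixed-degree) form on R^6: its coefficients on the standard basis
   dx^I = dx^{i_1} /\ ... /\ dx^{i_k}  (i_1 < ... < i_k), I : {set 'I_6}. *)
Definition xform (R : nzRingType) := {ffun {set 'I_6} -> R}.

Section Forms.
Variable R : comNzRingType.

Definition is_kform (k : nat) (phi : xform R) : Prop :=
  forall I : {set 'I_6}, #|I| != k -> phi I = 0.

(* sign of the permutation sorting the concatenation of I and J (I, J sorted) *)
Definition wsign (I J : {set 'I_6}) : R :=
  (-1) ^+ #|[set p : 'I_6 * 'I_6 | (p.1 \in I) && (p.2 \in J) && (p.2 < p.1)%N]|.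

Definition wedge (phi psi : xform R) : xform R :=
  [ffun K => \sum_(I : {set 'I_6}) \sum_(J : {set 'I_6})
      if (I :|: J == K) && (I :&: J == set0) then wsign I J * phi I * psi J else 0].

Definition one_form0 : xform R := [ffun K => (K == set0)%:R].

Definition oneform (v : 'rV[R]_6) : xform R :=
  [ffun K => \sum_(j : 'I_6) if K == [set j] then v 0 j else 0].

(* Algebra endomorphism of forms induced by dx^j |-> sum_i S j i dx^i,
   i.e. dx^J |-> /\_{j in J, increasing} (row j S). *)
Definition ext_map (S : 'M[R]_6) (phi : xform R) : xform R :=
  [ffun K => \sum_(J : {set 'I_6})
      phi J * (\big[wedge/one_form0]_(j in J) oneform (row j S)) K].

(* The basis e^1..e^6 of (R^6)^*: e^(i+1) is the 1-form whose standard
   coordinates are row i of E.  e^{I} = e^{i_1} /\ ... /\ e^{i_k}. *)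
Definition ebasis (E : 'M[R]_6) (i : 'I_6) : xform R := oneform (row i E).
Definition ebasisI (E : 'M[R]_6) (I : {set 'I_6}) : xform R :=
  \big[wedge/one_form0]_(i in I) ebasis E i.
End Forms.

(* Coordinates of phi in the basis {e^I}: since ext_map E dx^I = e^I and
   ext_map is functorial, phi = sum_I c_I e^I with c = ext_map E^{-1} phi. *)
Definition ecoords (R : comUnitRingType) (E : 'M[R]_6) (phi : xform R) : xform R :=
  ext_map (invmx E) phi.

(* Squared norm for the scalar product making the e^I orthonormal. *)
Definition sqnorm (R : comUnitRingType) (E : 'M[R]_6) (phi : xform R) : R :=
  \sum_(I : {set 'I_6}) (ecoords E phi I) ^+ 2.

(* 0-based indices: e^1 = ebasis E 0, ..., e^6 = ebasis E 5 *)
Definition i0 : 'I_6 := @Ordinal 6 0 isT.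
Definition i1 : 'I_6 := @Ordinal 6 1 isT.
Definition i2 : 'I_6 := @Ordinal 6 2 isT.
Definition i3 : 'I_6 := @Ordinal 6 3 isT.
Definition i4 : 'I_6 := @Ordinal 6 4 isT.
Definition i5 : 'I_6 := @Ordinal 6 5 isT.

Definition su3_omega (R : comNzRingType) (E : 'M[R]_6) : xform R :=
  wedge (ebasis E i0) (ebasis E i1) + wedge (ebasis E i2) (ebasis E i3)
  + wedge (ebasis E i4) (ebasis E i5).

(* rho = Re((e^1 + i e^2) /\ (e^3 + i e^4) /\ (e^5 + i e^6))
       = e^135 - e^146 - e^236 - e^245 *)
Definition su3_rho (R : comNzRingType) (E : 'M[R]_6) : xform R :=
  let e := ebasis E in
  wedge (e i0) (wedge (e i2) (e i4)) - wedge (e i0) (wedge (e i3) (e i5))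
  - wedge (e i1) (wedge (e i2) (e i5)) - wedge (e i1) (wedge (e i3) (e i4)).

Definition su3_adapted (R : comUnitRingType) (E : 'M[R]_6) (omega rho : xform R) : Prop :=
  [/\ E \in unitmx, omega = su3_omega E & rho = su3_rho E].

(* For S = invmx E, [ext_map S] is the algebra endomorphism of the
   exterior algebra extending S on 1-forms; it sends e^i to dx^i, so it turns
   [sqnorm E] into the plain sum of squares of coordinates and omega into
   omega0 = dx^01 + dx^23 + dx^45.  Everything then becomes
   polynomial in the 15 coordinates a_ij of alpha.
   (1) (1/2) omega0^2 /\ alpha = (a01 + a23 + a45) vol, and up to sign the
   coordinates of alpha /\ omega0 are the twelve a_ij with ij not in {01, 23, 45}
   together with a01 + a23, a01 + a45, a23 + a45; this gives the identity, and
   (a01 + a23 + a45)^2 <= 3 (a01^2 + a23^2 + a45^2) gives the bound.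
   (2) alpha^3 = 6 Pf(alpha) vol.  Expanding the Pfaffian along the first index,
   Cauchy-Schwarz, the bound 2 |Pf| <= |.|^2 for the 4x4 minors and the AM-GM
   inequality 27 A C^2 <= 4 (A + C)^3 give 9 Pf(alpha)^2 <= |alpha|^6. *)

From HB Require Import structures.
From mathcomp Require Import all_boot all_order all_algebra.
From mathcomp Require Import ring lra.
Set Implicit Arguments. Unset Strict Implicit. Unset Printing Implicit Defensive.
Import Order.TTheory GRing.Theory Num.Theory.
Local Open Scope ring_scope.

(** * The exterior algebra of (R^6)^* *)

Lemma sorted_enum_ltn n (A : {set 'I_n}) : sorted (fun a b : 'I_n => (a < b)%N) (enum A).
Proof.
rewrite /enum_mem -enumT; apply: sorted_filter; first by move=> a b c; exact: ltn_trans.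
by have := iota_ltn_sorted 0 n; rewrite -val_enum_ord sorted_map.
Qed.

Lemma enum_setU1_min n (m : 'I_n) (T : {set 'I_n}) :
  m \notin T -> (forall t, t \in T -> (m < t)%N) ->
  enum (m |: T) = m :: enum T.
Proof.
move=> mT mlt; apply: (@irr_sorted_eq _ (fun a b : 'I_n => (a < b)%N)).
- by move=> a b c; exact: ltn_trans.
- by move=> a; exact: ltnn.
- exact: sorted_enum_ltn.
- rewrite /= path_sortedE; last by move=> a b c; exact: ltn_trans.
  by rewrite sorted_enum_ltn andbT; apply/allP => t; rewrite mem_enum; exact: mlt.
- by move=> x; rewrite inE !mem_enum !inE.
Qed.

Lemma set_ind_min n (P : {set 'I_n} -> Prop) : P set0 ->
  (forall (m : 'I_n) (T : {set 'I_n}),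
     m \notin T -> (forall t, t \in T -> (m < t)%N) -> P T -> P (m |: T)) ->
  forall T, P T.
Proof.
move=> P0 PS T; move: {2}#|T| (erefl #|T|) => k; elim: k T => [|k IH] T cT.
  by rewrite (cards0_eq cT).
have /set0Pn[x xT] : T != set0 by rewrite -card_gt0 cT.
pose m := [arg min_(i < x in T) (i : nat)].
have [mT mmin] : m \in T /\ forall t, t \in T -> (m <= t)%N.
  by rewrite /m; case: arg_minnP.
rewrite -(setD1K mT); apply: PS.
- by rewrite setD11.
- move=> t /setD1P [tm tT]; rewrite ltn_neqAle mmin // andbT.
  by apply: contra tm => /eqP h; apply/eqP/val_inj.
- by apply: IH; move: cT; rewrite (cardsD1 m) mT add1n => -[].
Qed.

Lemma setU_disjoint_eq (T : finType) (I J K : {set T}) :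
  (I :|: J == K) && (I :&: J == set0) = (I \subset K) && (J == K :\: I).
Proof.
apply/andP/andP => [[/eqP <- /eqP dIJ]|[sIK /eqP ->]].
  split; first exact: subsetUl.
  apply/eqP; rewrite setDUl setDv set0U; apply/esym/setDidPl.
  by rewrite -setI_eq0 setIC dIJ.
split; last by rewrite setDE setICA setICr setI0.
by apply/eqP/setP => x; rewrite !inE; case: (boolP (x \in I)) => //= /(subsetP sIK).
Qed.

Section ExteriorAlgebra.
Variable R : numDomainType.
Implicit Types (phi psi chi : xform R) (I J K L M T : {set 'I_6}) (S : 'M[R]_6).

Definition dx I : xform R := [ffun K => (K == I)%:R].

Definition scalef (c : R) phi : xform R := [ffun K => c * phi K].

Lemma scalefE c phi K : scalef c phi K = c * phi K. Proof. by rewrite ffunE. Qed.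

Definition ninv I J : nat :=
  #|[set p : 'I_6 * 'I_6 | (p.1 \in I) && (p.2 \in J) && (p.2 < p.1)%N]|.

Lemma wsignE I J : wsign R I J = (-1) ^+ ninv I J. Proof. by []. Qed.

Definition wcoef I J K : R :=
  if (I :|: J == K) && (I :&: J == set0) then wsign R I J else 0.

Lemma wedge_coefE phi psi K :
  wedge phi psi K = \sum_I \sum_J phi I * psi J * wcoef I J K.
Proof.
rewrite ffunE; apply: eq_bigr => I _; apply: eq_bigr => J _.
by rewrite /wcoef; case: ifP => _; [ring | rewrite mulr0].
Qed.

Lemma sum_wcoef I J (f : {set 'I_6} -> R) :
  \sum_L wcoef I J L * f L = if I :&: J == set0 then wsign R I J * f (I :|: J) else 0.
Proof.
rewrite (bigD1 (I :|: J)) //= big1 ?addr0.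
  by rewrite /wcoef eqxx /=; case: ifP => _; rewrite ?mul0r.
by move=> L nL; rewrite /wcoef eq_sym (negbTE nL) /= mul0r.
Qed.

Lemma ninvUl I J M : I :&: J = set0 -> ninv (I :|: J) M = (ninv I M + ninv J M)%N.
Proof.
move=> dIJ; rewrite /ninv -cardsUI.
set A := [set p | _]; set B := [set p | _]; set C := [set p | _].
have -> : A = B :|: C by apply/setP => p; rewrite !inE !andb_orl.
suff -> : B :&: C = set0 by rewrite cards0 addn0.
apply/setP => p; rewrite !inE; apply/negbTE/negP.
move=> /andP[/andP[/andP[h1 _] _] /andP[/andP[h2 _] _]].
by move/setP: dIJ => /(_ p.1); rewrite !inE h1 h2.
Qed.

Lemma ninvUr I J M : J :&: M = set0 -> ninv I (J :|: M) = (ninv I J + ninv I M)%N.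
Proof.
move=> dJM; rewrite /ninv -cardsUI.
set A := [set p | _]; set B := [set p | _]; set C := [set p | _].
have -> : A = B :|: C by apply/setP => p; rewrite !inE andb_orr andb_orl.
suff -> : B :&: C = set0 by rewrite cards0 addn0.
apply/setP => p; rewrite !inE; apply/negbTE/negP.
move=> /andP[/andP[/andP[_ h1] _] /andP[/andP[_ h2] _]].
by move/setP: dJM => /(_ p.2); rewrite !inE h1 h2.
Qed.

(* If I, J, M are pairwise disjoint with union K, both sides equal
   (-1)^(ninv I J + ninv I M + ninv J M) by additivity of [ninv]; otherwise both vanish. *)
Lemma wcoef_assoc I J M K :
  \sum_L wcoef I J L * wcoef L M K = \sum_L wcoef J M L * wcoef I L K.
Proof.
rewrite sum_wcoef (eq_bigr (fun L => wcoef J M L * wcoef I L K)) //.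
rewrite sum_wcoef /wcoef setUA.
case: (boolP (I :&: J == set0)) => dIJ; case: (boolP (J :&: M == set0)) => dJM /=;
  rewrite ?mul0r ?mulr0 //.
- rewrite setIUl setU_eq0 (eqP dJM) eqxx andbT setIUr setU_eq0 (eqP dIJ) eqxx /=.
  case: ifP => _; rewrite ?mulr0 //.
  rewrite !wsignE -!exprD ninvUl ?(eqP dIJ) // ninvUr ?(eqP dJM) //.
  by congr (_ ^+ _); rewrite addnA [(ninv I J + _)%N]addnC addnA addnC addnA.
- by rewrite setIUl setU_eq0 (negbTE dJM) !andbF ?mulr0 ?mul0r.
- by rewrite setIUr setU_eq0 (negbTE dIJ) /= !andbF ?mulr0 ?mul0r.
Qed.

Lemma wedgeA phi psi chi : wedge phi (wedge psi chi) = wedge (wedge phi psi) chi.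
Proof.
apply/ffunP => K; rewrite !wedge_coefE.
transitivity (\sum_I \sum_J \sum_M
    phi I * psi J * chi M * \sum_L wcoef J M L * wcoef I L K).
  apply: eq_bigr => I _.
  under eq_bigr => L _ do rewrite wedge_coefE mulr_sumr mulr_suml.
  rewrite exchange_big; apply: eq_bigr => J _.
  under eq_bigr => L _ do rewrite mulr_sumr mulr_suml.
  rewrite exchange_big; apply: eq_bigr => M _.
  by rewrite mulr_sumr; apply: eq_bigr => L _; ring.
symmetry; transitivity (\sum_M \sum_I \sum_J
    phi I * psi J * chi M * \sum_L wcoef I J L * wcoef L M K).
  rewrite exchange_big; apply: eq_bigr => M _.
  under eq_bigr => L _ do rewrite wedge_coefE mulr_suml mulr_suml.
  rewrite exchange_big; apply: eq_bigr => I _.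
  under eq_bigr => L _ do rewrite mulr_suml mulr_suml.
  rewrite exchange_big; apply: eq_bigr => J _.
  by rewrite mulr_sumr; apply: eq_bigr => L _; ring.
rewrite exchange_big; apply: eq_bigr => I _.
rewrite exchange_big; apply: eq_bigr => J _.
by apply: eq_bigr => M _; rewrite wcoef_assoc.
Qed.

Lemma ninv0l J : ninv set0 J = 0%N.
Proof. by apply/eqP; rewrite cards_eq0; apply/eqP/setP => p; rewrite !inE. Qed.

Lemma ninv0r I : ninv I set0 = 0%N.
Proof. by apply/eqP; rewrite cards_eq0; apply/eqP/setP => p; rewrite !inE andbF. Qed.

Lemma sum_mul_delta f K : \sum_J f J * (J == K)%:R = f K :> R.
Proof.
by rewrite (bigD1 K) //= eqxx mulr1 big1 ?addr0 // => J /negbTE ->; rewrite mulr0.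
Qed.

Lemma wedge1f phi : wedge (one_form0 R) phi = phi.
Proof.
apply/ffunP => K; rewrite wedge_coefE (bigD1 set0) //= [X in _ + X]big1 ?addr0; last first.
  by move=> I nI; apply: big1 => J _; rewrite ffunE (negbTE nI) !mul0r.
rewrite -[RHS](sum_mul_delta phi); apply: eq_bigr => J _; rewrite ffunE eqxx mul1r.
by rewrite /wcoef set0U set0I eqxx andbT wsignE ninv0l expr0; case: eqP.
Qed.

Lemma wedgef1 phi : wedge phi (one_form0 R) = phi.
Proof.
apply/ffunP => K; rewrite wedge_coefE -[RHS](sum_mul_delta phi); apply: eq_bigr => I _.
rewrite (bigD1 set0) //= big1 ?addr0; last first.
  by move=> J nJ; rewrite ffunE (negbTE nJ) mulr0 mul0r.
by rewrite ffunE eqxx mulr1 /wcoef setU0 setI0 eqxx andbT wsignE ninv0r expr0; case: eqP.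
Qed.

Lemma wedgeDl phi1 phi2 psi :
  wedge (phi1 + phi2) psi = wedge phi1 psi + wedge phi2 psi.
Proof.
apply/ffunP => K; rewrite [RHS]ffunE !wedge_coefE -big_split; apply: eq_bigr => I _.
by rewrite -big_split; apply: eq_bigr => J _; rewrite ffunE !mulrDl.
Qed.

Lemma wedgeDr phi psi1 psi2 :
  wedge phi (psi1 + psi2) = wedge phi psi1 + wedge phi psi2.
Proof.
apply/ffunP => K; rewrite [RHS]ffunE !wedge_coefE -big_split; apply: eq_bigr => I _.
by rewrite -big_split; apply: eq_bigr => J _; rewrite ffunE mulrDr mulrDl.
Qed.

Lemma wedgeZl c phi psi : wedge (scalef c phi) psi = scalef c (wedge phi psi).
Proof.
apply/ffunP => K; rewrite [RHS]ffunE !wedge_coefE mulr_sumr; apply: eq_bigr => I _.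
by rewrite mulr_sumr; apply: eq_bigr => J _; rewrite ffunE; ring.
Qed.

Lemma wedgeZr c phi psi : wedge phi (scalef c psi) = scalef c (wedge phi psi).
Proof.
apply/ffunP => K; rewrite [RHS]ffunE !wedge_coefE mulr_sumr; apply: eq_bigr => I _.
by rewrite mulr_sumr; apply: eq_bigr => J _; rewrite ffunE; ring.
Qed.

Lemma wedge0f psi : wedge 0 psi = 0.
Proof.
apply/ffunP => K; rewrite [RHS]ffunE wedge_coefE big1 // => I _; apply: big1 => J _.
by rewrite ffunE !mul0r.
Qed.

Lemma wedgef0 phi : wedge phi 0 = 0.
Proof.
apply/ffunP => K; rewrite [RHS]ffunE wedge_coefE big1 // => I _; apply: big1 => J _.
by rewrite ffunE mulr0 mul0r.
Qed.

Lemma wedgeNl phi psi : wedge (- phi) psi = - wedge phi psi.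
Proof.
apply/ffunP => K; rewrite [RHS]ffunE !wedge_coefE -sumrN; apply: eq_bigr => I _.
by rewrite -sumrN; apply: eq_bigr => J _; rewrite ffunE; ring.
Qed.

Lemma wedge_suml (T : Type) (r : seq T) (P : pred T) (F : T -> xform R) psi :
  wedge (\sum_(i <- r | P i) F i) psi = \sum_(i <- r | P i) wedge (F i) psi.
Proof. by elim/big_rec2: _ => [|i y1 y2 _ <-]; [exact: wedge0f | exact: wedgeDl]. Qed.

Lemma wedge_sumr (T : Type) (r : seq T) (P : pred T) (F : T -> xform R) phi :
  wedge phi (\sum_(i <- r | P i) F i) = \sum_(i <- r | P i) wedge phi (F i).
Proof. by elim/big_rec2: _ => [|i y1 y2 _ <-]; [exact: wedgef0 | exact: wedgeDr]. Qed.

Lemma scalefA a b phi : scalef a (scalef b phi) = scalef (a * b) phi.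
Proof. by apply/ffunP => K; rewrite !ffunE mulrA. Qed.

Lemma scalefN c phi : scalef c (- phi) = - scalef c phi.
Proof. by apply/ffunP => K; rewrite !ffunE mulrN. Qed.

Lemma scaleNf c phi : scalef (- c) phi = - scalef c phi.
Proof. by apply/ffunP => K; rewrite !ffunE mulNr. Qed.

Lemma scale0f phi : scalef 0 phi = 0.
Proof. by apply/ffunP => K; rewrite !ffunE mul0r. Qed.

Lemma scalef0 c : scalef c 0 = 0.
Proof. by apply/ffunP => K; rewrite !ffunE mulr0. Qed.

Lemma scale1f phi : scalef 1 phi = phi.
Proof. by apply/ffunP => K; rewrite ffunE mul1r. Qed.

Lemma scalef_sum (T : Type) (r : seq T) (P : pred T) (F : T -> xform R) c :
  scalef c (\sum_(i <- r | P i) F i) = \sum_(i <- r | P i) scalef c (F i).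
Proof.
apply/ffunP => K; rewrite ffunE !sum_ffunE mulr_sumr.
by apply: eq_bigr => i _; rewrite ffunE.
Qed.

Lemma xform_expand phi : phi = \sum_I scalef (phi I) (dx I).
Proof.
apply/ffunP => K; rewrite sum_ffunE -[LHS](sum_mul_delta phi); apply: eq_bigr => I _.
by rewrite !ffunE eq_sym.
Qed.

Lemma wedge_dx I J : wedge (dx I) (dx J) =
  if [disjoint I & J] then scalef (wsign R I J) (dx (I :|: J)) else 0.
Proof.
apply/ffunP => K; rewrite wedge_coefE (bigD1 I) //= [X in _ + X]big1 ?addr0; last first.
  by move=> I' nI; apply: big1 => J' _; rewrite ffunE (negbTE nI) !mul0r.
rewrite (bigD1 J) //= [X in _ + X]big1 ?addr0; last first.
  by move=> J' nJ; rewrite !ffunE (negbTE nJ) mulr0 mul0r.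
rewrite !ffunE !eqxx !mul1r /wcoef setI_eq0.
case: (boolP [disjoint I & J]) => dIJ; last by rewrite andbF ffunE.
by rewrite andbT !ffunE eq_sym; case: eqP => _; rewrite ?mulr1 ?mulr0.
Qed.

Lemma ninv_set1 (i j : 'I_6) : ninv [set i] [set j] = (j < i)%N.
Proof.
case: (ltnP j i) => h.
  rewrite /ninv (_ : [set p | _] = [set (i, j)]) ?cards1 //.
  apply/setP => -[a b]; rewrite !inE /=.
  apply/andP/eqP => [[/andP[/eqP -> /eqP ->] _]|[-> ->]] //.
  by rewrite !eqxx h.
apply/eqP; rewrite cards_eq0; apply/eqP/setP => -[a b]; rewrite !inE /=.
by apply/negbTE/negP => /andP[/andP[/eqP -> /eqP ->]]; rewrite ltnNge h.
Qed.

Lemma wedge_dx1C (i j : 'I_6) :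
  wedge (dx [set i]) (dx [set j]) = - wedge (dx [set j]) (dx [set i]).
Proof.
rewrite !wedge_dx !disjoints1 !in_set1 eq_sym.
case: eqP => [->|/eqP ne]; first by rewrite oppr0.
rewrite -scaleNf setUC !wsignE !ninv_set1.
case: (ltngtP i j) => h; rewrite ?expr0 ?expr1 ?opprK //.
by move: ne; rewrite eq_sym -val_eqE /= h eqxx.
Qed.

Lemma oneform_expand (v : 'rV[R]_6) : oneform v = \sum_j scalef (v 0 j) (dx [set j]).
Proof.
apply/ffunP => K; rewrite ffunE sum_ffunE; apply: eq_bigr => j _; rewrite !ffunE.
by case: eqP => _; rewrite ?mulr1 ?mulr0.
Qed.

Lemma wedge_oneformC (v w : 'rV[R]_6) :
  wedge (oneform v) (oneform w) = - wedge (oneform w) (oneform v).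
Proof.
have wedge_oneformE (a b : 'rV[R]_6) : wedge (oneform a) (oneform b) =
    \sum_i \sum_j scalef (a 0 i * b 0 j) (wedge (dx [set i]) (dx [set j])).
  rewrite !oneform_expand wedge_suml; apply: eq_bigr => i _.
  rewrite wedgeZl wedge_sumr scalef_sum; apply: eq_bigr => j _.
  by rewrite wedgeZr scalefA.
rewrite !wedge_oneformE.
under eq_bigr do under eq_bigr do rewrite wedge_dx1C scalefN.
rewrite exchange_big -sumrN; apply: eq_bigr => j _.
by rewrite -sumrN; apply: eq_bigr => i _; rewrite mulrC.
Qed.

Lemma wedge_oneform_id (v : 'rV[R]_6) : wedge (oneform v) (oneform v) = 0.
Proof.
apply/ffunP => K; move/ffunP/(_ K): (wedge_oneformC v v); rewrite !ffunE.
by move/eqP; rewrite -addr_eq0 -mulr2n => /eqP/eqP; rewrite mulrn_eq0 => /eqP.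
Qed.


Lemma ebasisI0 S : ebasisI S set0 = one_form0 R.
Proof. by rewrite /ebasisI big_set0. Qed.

Lemma ebasisI_setU1 S m T : m \notin T -> (forall t, t \in T -> (m < t)%N) ->
  ebasisI S (m |: T) = wedge (ebasis S m) (ebasisI S T).
Proof.
have big_enumE A : ebasisI S A = \big[@wedge R/one_form0 R]_(j <- enum A) ebasis S j.
  by rewrite /ebasisI -big_filter; congr bigop.
by move=> mT mlt; rewrite !big_enumE enum_setU1_min // big_cons.
Qed.

Lemma ebasisI1 S m : ebasisI S [set m] = ebasis S m.
Proof.
rewrite -[[set m]]setU0 ebasisI_setU1 ?inE // ?ebasisI0 ?wedgef1 // => t.
by rewrite inE.
Qed.

Lemma ninv_set1_min (x : 'I_6) T :
  (forall t, t \in T -> (x <= t)%N) -> ninv [set x] T = 0%N.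
Proof.
move=> h; apply/eqP; rewrite cards_eq0; apply/eqP/setP => -[a b]; rewrite !inE /=.
apply/negbTE/negP => /andP[/andP[/eqP -> bT] ltbx].
by move: (h b bT); rewrite leqNgt ltbx.
Qed.

Lemma wedge_ebasis_ebasisI S (x : 'I_6) T :
  wedge (ebasis S x) (ebasisI S T) =
  if x \in T then 0 else scalef (wsign R [set x] T) (ebasisI S (x |: T)).
Proof.
elim/set_ind_min: T => [|m T mT mlt IH].
  by rewrite ebasisI0 wedgef1 inE wsignE ninv0r expr0 scale1f setU0 ebasisI1.
rewrite ebasisI_setU1 //.
case: (ltngtP x m) => h.
- have xT : x \notin m |: T.
    rewrite !inE negb_or; apply/andP; split.
      by apply/eqP => xm; move: h; rewrite xm ltnn.
    by apply/negP => /mlt; rewrite ltnNge ltnW.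
  rewrite (negbTE xT) wsignE ninv_set1_min ?expr0 ?scale1f; last first.
    move=> t; rewrite !inE => /orP[/eqP -> | /mlt]; first exact: ltnW.
    by move=> mt; apply: ltnW; apply: ltn_trans mt.
  rewrite !ebasisI_setU1 // => t.
  by rewrite !inE => /orP[/eqP -> // | /mlt]; apply: ltn_trans.
- rewrite wedgeA wedge_oneformC wedgeNl -wedgeA IH !inE.
  have xm : (x == m) = false by apply/negbTE/eqP => xm; move: h; rewrite xm ltnn.
  rewrite xm /=; case: (boolP (x \in T)) => xT; first by rewrite wedgef0 oppr0.
  rewrite wedgeZr -ebasisI_setU1; last first.
  + by move=> t; rewrite !inE => /orP[/eqP -> // | /mlt].
  + by rewrite !inE negb_or mT andbT eq_sym xm.
  rewrite -scaleNf setUCA !wsignE ninvUr; last first.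
    by apply/setP => t; rewrite !inE; apply/negbTE/andP => -[/eqP ->]; rewrite (negbTE mT).
  by rewrite ninv_set1 h exprD expr1 mulN1r.
- have -> : x = m by apply: val_inj.
  by rewrite wedgeA wedge_oneform_id wedge0f !inE eqxx.
Qed.

Lemma ext_mapE S phi : ext_map S phi = \sum_J scalef (phi J) (ebasisI S J).
Proof. by apply/ffunP => K; rewrite !ffunE sum_ffunE; apply: eq_bigr => J _; rewrite ffunE. Qed.

Lemma ext_mapD S phi psi : ext_map S (phi + psi) = ext_map S phi + ext_map S psi.
Proof.
apply/ffunP => K; rewrite [RHS]ffunE !ffunE -big_split; apply: eq_bigr => J _.
by rewrite ffunE mulrDl.
Qed.

Lemma ext_mapZ S c phi : ext_map S (scalef c phi) = scalef c (ext_map S phi).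
Proof.
apply/ffunP => K; rewrite [RHS]ffunE !ffunE mulr_sumr; apply: eq_bigr => J _.
by rewrite ffunE mulrA.
Qed.

Lemma ext_map0 S : ext_map S 0 = 0.
Proof. by apply/ffunP => K; rewrite !ffunE big1 // => J _; rewrite ffunE mul0r. Qed.

Lemma ext_map_sum S (T : Type) (r : seq T) (P : pred T) (F : T -> xform R) :
  ext_map S (\sum_(i <- r | P i) F i) = \sum_(i <- r | P i) ext_map S (F i).
Proof. by elim/big_rec2: _ => [|i y1 y2 _ <-]; [exact: ext_map0 | exact: ext_mapD]. Qed.

Lemma ext_map_dx S I : ext_map S (dx I) = ebasisI S I.
Proof.
rewrite ext_mapE (bigD1 I) //= big1 ?addr0; first by rewrite ffunE eqxx scale1f.
by move=> J nJ; rewrite ffunE (negbTE nJ) scale0f.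
Qed.

Lemma dx_setU1 m T : m \notin T -> (forall t, t \in T -> (m < t)%N) ->
  dx (m |: T) = wedge (dx [set m]) (dx T).
Proof.
move=> mT mlt; rewrite wedge_dx disjoints1 mT wsignE ninv_set1_min ?expr0 ?scale1f //.
by move=> t /mlt /ltnW.
Qed.

Lemma ext_map_wedge S phi psi :
  ext_map S (wedge phi psi) = wedge (ext_map S phi) (ext_map S psi).
Proof.
have wedge_dx1 (x : 'I_6) chi :
    ext_map S (wedge (dx [set x]) chi) = wedge (ebasis S x) (ext_map S chi).
  rewrite (xform_expand chi) wedge_sumr !ext_map_sum wedge_sumr; apply: eq_bigr => T _.
  rewrite wedgeZr !ext_mapZ wedgeZr ext_map_dx wedge_dx wedge_ebasis_ebasisI disjoints1.
  by case: (x \in T); rewrite /= ?ext_map0 ?scalef0 // ext_mapZ ext_map_dx.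
have wedge_dxl I chi : ext_map S (wedge (dx I) chi) = wedge (ebasisI S I) (ext_map S chi).
  elim/set_ind_min: I chi => [|m T mT mlt IH] chi.
    by rewrite ebasisI0 (_ : dx set0 = one_form0 R) // !wedge1f.
  by rewrite dx_setU1 // -wedgeA wedge_dx1 IH wedgeA -ebasisI_setU1.
rewrite (xform_expand phi) wedge_suml !ext_map_sum wedge_suml; apply: eq_bigr => I _.
by rewrite wedgeZl !ext_mapZ wedgeZl ext_map_dx wedge_dxl.
Qed.

Lemma ext_map_oneform S (v : 'rV[R]_6) : ext_map S (oneform v) = oneform (v *m S).
Proof.
rewrite oneform_expand ext_map_sum.
under eq_bigr do rewrite ext_mapZ ext_map_dx ebasisI1.
apply/ffunP => K; rewrite sum_ffunE oneform_expand sum_ffunE.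
under eq_bigr do rewrite ffunE /ebasis oneform_expand sum_ffunE mulr_sumr.
rewrite exchange_big; apply: eq_bigr => i _.
rewrite ffunE !mxE mulr_suml; apply: eq_bigr => j _.
by rewrite ffunE mxE mulrA.
Qed.

Lemma kform_dx I : is_kform #|I| (dx I).
Proof. by move=> K nK; rewrite ffunE; case: eqP => // KI; move: nK; rewrite KI eqxx. Qed.

Lemma kform_wedge k l phi psi : is_kform k phi -> is_kform l psi ->
  is_kform (k + l) (wedge phi psi).
Proof.
move=> hp hq K nK; rewrite wedge_coefE big1 // => I _; apply: big1 => J _.
case: (boolP (#|I| == k)) => [/eqP cI|nI]; last by rewrite hp // !mul0r.
case: (boolP (#|J| == l)) => [/eqP cJ|nJ]; last by rewrite (hq J nJ) mulr0 mul0r.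
rewrite /wcoef; case: ifP => [/andP[/eqP UK /eqP IJ0]|]; last by rewrite mulr0.
by move: nK; rewrite -UK -cI -cJ -cardsUI IJ0 cards0 addn0 eqxx.
Qed.

Lemma kform_add k phi psi : is_kform k phi -> is_kform k psi -> is_kform k (phi + psi).
Proof. by move=> hp hq K nK; rewrite ffunE hp // hq // addr0. Qed.

Lemma kform_ext_map S k phi : is_kform k phi -> is_kform k (ext_map S phi).
Proof.
have kform_ebasisI T : is_kform #|T| (ebasisI S T).
  elim/set_ind_min: T => [|m T mT mlt IH].
    by rewrite ebasisI0 (_ : one_form0 R = dx set0) //; exact: kform_dx.
  rewrite ebasisI_setU1 // cardsU1 mT; apply: kform_wedge IH.
  by move=> K nK; rewrite ffunE big1 // => j _; case: eqP => // KE; move: nK; rewrite KE cards1.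
move=> hp K nK; rewrite ffunE big1 // => J _.
case: (boolP (#|J| == k)) => [/eqP cJ|nJ]; last by rewrite hp // mul0r.
by rewrite kform_ebasisI ?mulr0 // cJ.
Qed.

End ExteriorAlgebra.

(** * Polynomial inequalities *)

Section Inequalities.
Variable R : realDomainType.

Lemma sqr_add3_le (a b c : R) : (a + b + c) ^+ 2 <= 3%:R * (a ^+ 2 + b ^+ 2 + c ^+ 2).
Proof.
have := sqr_ge0 (a - b); have := sqr_ge0 (a - c); have := sqr_ge0 (b - c); lra.
Qed.

Lemma cauchy_schwarz5 (y1 y2 y3 y4 y5 q1 q2 q3 q4 q5 : R) :
  (y1 * q1 + y2 * q2 + y3 * q3 + y4 * q4 + y5 * q5) ^+ 2 <=
  (y1 ^+ 2 + y2 ^+ 2 + y3 ^+ 2 + y4 ^+ 2 + y5 ^+ 2) *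
  (q1 ^+ 2 + q2 ^+ 2 + q3 ^+ 2 + q4 ^+ 2 + q5 ^+ 2).
Proof.
rewrite -subr_ge0.
(* Lagrange's identity *)
have -> : (y1 ^+ 2 + y2 ^+ 2 + y3 ^+ 2 + y4 ^+ 2 + y5 ^+ 2) *
    (q1 ^+ 2 + q2 ^+ 2 + q3 ^+ 2 + q4 ^+ 2 + q5 ^+ 2) -
    (y1 * q1 + y2 * q2 + y3 * q3 + y4 * q4 + y5 * q5) ^+ 2 =
  (y1 * q2 - y2 * q1) ^+ 2 + (y1 * q3 - y3 * q1) ^+ 2 + (y1 * q4 - y4 * q1) ^+ 2
  + (y1 * q5 - y5 * q1) ^+ 2 + (y2 * q3 - y3 * q2) ^+ 2 + (y2 * q4 - y4 * q2) ^+ 2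
  + (y2 * q5 - y5 * q2) ^+ 2 + (y3 * q4 - y4 * q3) ^+ 2 + (y3 * q5 - y5 * q3) ^+ 2
  + (y4 * q5 - y5 * q4) ^+ 2 by ring.
by rewrite !addr_ge0 ?sqr_ge0.
Qed.

Definition pfaffian4 (x01 x02 x03 x12 x13 x23 : R) := x01 * x23 - x02 * x13 + x03 * x12.

Lemma pfaffian4_sq_le (x01 x02 x03 x12 x13 x23 : R) :
  4%:R * pfaffian4 x01 x02 x03 x12 x13 x23 ^+ 2 <=
  (x01 ^+ 2 + x02 ^+ 2 + x03 ^+ 2 + x12 ^+ 2 + x13 ^+ 2 + x23 ^+ 2) ^+ 2.
Proof.
set T := _ + x23 ^+ 2; set P := pfaffian4 _ _ _ _ _ _.
have hm : 0 <= T - 2%:R * P.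
  have -> : T - 2%:R * P = (x01 - x23) ^+ 2 + (x02 + x13) ^+ 2 + (x03 - x12) ^+ 2.
    by rewrite /T /P /pfaffian4; ring.
  by rewrite !addr_ge0 ?sqr_ge0.
have hp : 0 <= T + 2%:R * P.
  have -> : T + 2%:R * P = (x01 + x23) ^+ 2 + (x02 - x13) ^+ 2 + (x03 + x12) ^+ 2.
    by rewrite /T /P /pfaffian4; ring.
  by rewrite !addr_ge0 ?sqr_ge0.
rewrite -subr_ge0 (_ : _ - _ = (T - 2%:R * P) * (T + 2%:R * P)); last by ring.
exact: mulr_ge0.
Qed.

Lemma amgm_cubic (A C : R) : 0 <= A -> 0 <= C -> 27%:R * A * C ^+ 2 <= 4%:R * (A + C) ^+ 3.
Proof.
move=> hA hC; rewrite -subr_ge0.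
have -> : 4%:R * (A + C) ^+ 3 - 27%:R * A * C ^+ 2 = (C - 2%:R * A) ^+ 2 * (4%:R * C + A).
  by ring.
by apply: mulr_ge0; [exact: sqr_ge0 | lra].
Qed.

Lemma pfaffian4_minors_sq_le (x12 x13 x14 x15 x23 x24 x25 x34 x35 x45 : R) :
  4%:R * (pfaffian4 x23 x24 x25 x34 x35 x45 ^+ 2 + pfaffian4 x13 x14 x15 x34 x35 x45 ^+ 2
    + pfaffian4 x12 x14 x15 x24 x25 x45 ^+ 2 + pfaffian4 x12 x13 x15 x23 x25 x35 ^+ 2
    + pfaffian4 x12 x13 x14 x23 x24 x34 ^+ 2) <=
  3%:R * (x12 ^+ 2 + x13 ^+ 2 + x14 ^+ 2 + x15 ^+ 2 + x23 ^+ 2 + x24 ^+ 2 + x25 ^+ 2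
    + x34 ^+ 2 + x35 ^+ 2 + x45 ^+ 2) ^+ 2.
Proof.
set C := _ + x45 ^+ 2.
set T1 := x23 ^+ 2 + x24 ^+ 2 + x25 ^+ 2 + x34 ^+ 2 + x35 ^+ 2 + x45 ^+ 2.
set T2 := x13 ^+ 2 + x14 ^+ 2 + x15 ^+ 2 + x34 ^+ 2 + x35 ^+ 2 + x45 ^+ 2.
set T3 := x12 ^+ 2 + x14 ^+ 2 + x15 ^+ 2 + x24 ^+ 2 + x25 ^+ 2 + x45 ^+ 2.
set T4 := x12 ^+ 2 + x13 ^+ 2 + x15 ^+ 2 + x23 ^+ 2 + x25 ^+ 2 + x35 ^+ 2.
set T5 := x12 ^+ 2 + x13 ^+ 2 + x14 ^+ 2 + x23 ^+ 2 + x24 ^+ 2 + x34 ^+ 2.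
(* every square of C occurs in exactly three of the T_j *)
have sumT : C * T1 + C * T2 + C * T3 + C * T4 + C * T5 = 3%:R * C ^+ 2.
  by rewrite /C /T1 /T2 /T3 /T4 /T5; ring.
have sq_le_C (T : R) : 0 <= T -> T <= C -> T ^+ 2 <= C * T.
  by move=> T0 TC; rewrite expr2 ler_wpM2r.
move: (sqr_ge0 x12) (sqr_ge0 x13) (sqr_ge0 x14) (sqr_ge0 x15) (sqr_ge0 x23)
  (sqr_ge0 x24) (sqr_ge0 x25) (sqr_ge0 x34) (sqr_ge0 x35) (sqr_ge0 x45) => *.
have t1 : T1 ^+ 2 <= C * T1 by apply: sq_le_C; rewrite /T1 /C; lra.
have t2 : T2 ^+ 2 <= C * T2 by apply: sq_le_C; rewrite /T2 /C; lra.
have t3 : T3 ^+ 2 <= C * T3 by apply: sq_le_C; rewrite /T3 /C; lra.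
have t4 : T4 ^+ 2 <= C * T4 by apply: sq_le_C; rewrite /T4 /C; lra.
have t5 : T5 ^+ 2 <= C * T5 by apply: sq_le_C; rewrite /T5 /C; lra.
have := pfaffian4_sq_le x23 x24 x25 x34 x35 x45.
have := pfaffian4_sq_le x13 x14 x15 x34 x35 x45.
have := pfaffian4_sq_le x12 x14 x15 x24 x25 x45.
have := pfaffian4_sq_le x12 x13 x15 x23 x25 x35.
have := pfaffian4_sq_le x12 x13 x14 x23 x24 x34.
rewrite -/T1 -/T2 -/T3 -/T4 -/T5 -sumT; lra.
Qed.

Definition pfaffian6 (x01 x02 x03 x04 x05 x12 x13 x14 x15 x23 x24 x25 x34 x35 x45 : R) :=
  x01 * pfaffian4 x23 x24 x25 x34 x35 x45 - x02 * pfaffian4 x13 x14 x15 x34 x35 x45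
  + x03 * pfaffian4 x12 x14 x15 x24 x25 x45 - x04 * pfaffian4 x12 x13 x15 x23 x25 x35
  + x05 * pfaffian4 x12 x13 x14 x23 x24 x34.

Lemma pfaffian6_sq_le (x01 x02 x03 x04 x05 x12 x13 x14 x15 x23 x24 x25 x34 x35 x45 : R) :
  9%:R * pfaffian6 x01 x02 x03 x04 x05 x12 x13 x14 x15 x23 x24 x25 x34 x35 x45 ^+ 2 <=
  (x01 ^+ 2 + x02 ^+ 2 + x03 ^+ 2 + x04 ^+ 2 + x05 ^+ 2 + x12 ^+ 2 + x13 ^+ 2 + x14 ^+ 2
   + x15 ^+ 2 + x23 ^+ 2 + x24 ^+ 2 + x25 ^+ 2 + x34 ^+ 2 + x35 ^+ 2 + x45 ^+ 2) ^+ 3.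
Proof.
have := pfaffian4_minors_sq_le x12 x13 x14 x15 x23 x24 x25 x34 x35 x45.
have := cauchy_schwarz5 x01 (- x02) x03 (- x04) x05 (pfaffian4 x23 x24 x25 x34 x35 x45)
  (pfaffian4 x13 x14 x15 x34 x35 x45) (pfaffian4 x12 x14 x15 x24 x25 x45)
  (pfaffian4 x12 x13 x15 x23 x25 x35) (pfaffian4 x12 x13 x14 x23 x24 x34).
rewrite /pfaffian6 !sqrrN !mulNr.
set A := x01 ^+ 2 + _ + _ + _ + _; set C := x12 ^+ 2 + _ + _ + _ + _ + _ + _ + _ + _ + _.
set Q := _ + _ + _ + _ + pfaffian4 _ _ _ _ _ _ ^+ 2.
rewrite (_ : _ ^+ 3 = (A + C) ^+ 3); last by rewrite /A /C; ring.
set Pf := _ + _ + _ + _ + _ * _ => first_row minors.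
have hA : 0 <= A by rewrite /A !addr_ge0 ?sqr_ge0.
have hC : 0 <= C by rewrite /C !addr_ge0 ?sqr_ge0.
have := amgm_cubic hA hC.
have : A * (4%:R * Q) <= A * (3%:R * C ^+ 2) by rewrite ler_wpM2l.
lra.
Qed.

(* Stated with equations, so that it applies to expanded coordinate expressions and
   leaves the identification to [ring]. *)
Lemma pfaffian6_bound (x01 x02 x03 x04 x05 x12 x13 x14 x15 x23 x24 x25 x34 x35 x45 P S : R) :
  P = 6%:R * pfaffian6 x01 x02 x03 x04 x05 x12 x13 x14 x15 x23 x24 x25 x34 x35 x45 ->
  S = x01 ^+ 2 + x02 ^+ 2 + x03 ^+ 2 + x04 ^+ 2 + x05 ^+ 2 + x12 ^+ 2 + x13 ^+ 2 + x14 ^+ 2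
      + x15 ^+ 2 + x23 ^+ 2 + x24 ^+ 2 + x25 ^+ 2 + x34 ^+ 2 + x35 ^+ 2 + x45 ^+ 2 ->
  P ^+ 2 <= 6%:R * S ^+ 3.
Proof.
move=> -> eS; have := pfaffian6_sq_le x01 x02 x03 x04 x05 x12 x13 x14 x15 x23 x24 x25 x34 x35 x45.
rewrite -eS; have : 0 <= S ^+ 3 by rewrite exprn_ge0 // eS !addr_ge0 ?sqr_ge0.
move: (pfaffian6 _ _ _ _ _ _ _ _ _ _ _ _ _ _ _) => pf; lra.
Qed.

End Inequalities.

(** * Wedge products in coordinates *)

(* Finite sets do not reduce under [simpl], so subsets of 'I_6 are enumerated as
   boolean lists, and the set operations entering a wedge coefficient get list
   counterparts that [simpl] evaluates. *)
Definition set_of_bits (bs : seq bool) : {set 'I_6} := [set i : 'I_6 | nth false bs i].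
Arguments set_of_bits : simpl never.

Fixpoint all_bits n : seq (seq bool) :=
  if n is n'.+1 then [seq b :: l | b <- [:: true; false], l <- all_bits n'] else [:: [::]].

(* [sumn] is built on [addn], which [simpl] does not unfold. *)
Fixpoint sumn_simpl (l : seq nat) : nat :=
  if l is x :: l' then Nat.add x (sumn_simpl l') else 0%N.

Lemma sumn_simplE l : sumn_simpl l = sumn l. Proof. by elim: l => //= x l ->. Qed.

Definition card_bits bs := sumn_simpl [seq nat_of_bool (nth false bs i) | i <- iota 0 6].
Definition bits_of_card k := [seq bs <- all_bits 6 | card_bits bs == k].
Definition subset_bits bs cs := all (fun i => nth false bs i ==> nth false cs i) (iota 0 6).
Definition setD_bits cs bs := [seq nth false cs i && ~~ nth false bs i | i <- iota 0 6].
Definition eq_bits bs cs := all (fun i => nth false bs i == nth false cs i) (iota 0 6).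
Definition ninv_bits bs cs := sumn_simpl [seq sumn_simpl
  [seq nat_of_bool [&& nth false bs p, nth false cs q & (q < p)%N] | q <- iota 0 6]
  | p <- iota 0 6].

Lemma in_set_of_bits (i : 'I_6) bs : (i \in set_of_bits bs) = nth false bs i.
Proof. by rewrite inE. Qed.

Lemma sum_ord6 (f : nat -> nat) : (\sum_(i < 6) f i)%N = sumn [seq f i | i <- iota 0 6].
Proof. by rewrite sumnE big_map -(big_mkord xpredT f). Qed.

Lemma card_set_of_bits bs : #|set_of_bits bs| = card_bits bs.
Proof.
rewrite -sum1_card big_mkcond /= /card_bits sumn_simplE -sum_ord6.
by apply: eq_bigr => i _; rewrite in_set_of_bits; case: nth.
Qed.

Lemma ninv_set_of_bits bs cs : ninv (set_of_bits bs) (set_of_bits cs) = ninv_bits bs cs.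
Proof.
rewrite /ninv -sum1_card big_mkcond /=.
transitivity (\sum_(p < 6) \sum_(q < 6)
    nat_of_bool [&& nth false bs p, nth false cs q & (q < p)%N])%N.
  rewrite pair_big /=; apply: eq_bigr => -[p q] _ /=.
  by rewrite !inE /= -andbA; case: (_ && _).
rewrite /ninv_bits sumn_simplE -sum_ord6; apply: eq_bigr => p _.
by rewrite sumn_simplE -sum_ord6.
Qed.

Lemma subset_set_of_bits bs cs :
  (set_of_bits bs \subset set_of_bits cs) = subset_bits bs cs.
Proof.
apply/subsetP/allP => [h i|h x]; first rewrite mem_iota /= => lt6.
  by apply/implyP => hb; have := h (Ordinal lt6); rewrite !in_set_of_bits; apply.
rewrite !in_set_of_bits => hb.
by have := h x; rewrite mem_iota /= ltn_ord => /(_ isT) /implyP; apply.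
Qed.

Lemma setD_set_of_bits cs bs :
  set_of_bits cs :\: set_of_bits bs = set_of_bits (setD_bits cs bs).
Proof.
apply/setP => x; rewrite !inE (nth_map 0) ?size_iota ?ltn_ord // nth_iota ?ltn_ord //.
by rewrite andbC.
Qed.

Lemma eq_set_of_bits cs bs : (set_of_bits cs == set_of_bits bs) = eq_bits cs bs.
Proof.
apply/eqP/allP => [h i|h]; first rewrite mem_iota /= => lt6.
  by move/setP: h => /(_ (Ordinal lt6)); rewrite !in_set_of_bits => ->.
by apply/setP => x; rewrite !in_set_of_bits; apply/eqP/h; rewrite mem_iota /= ltn_ord.
Qed.

Lemma mem_all_bits n l : size l = n -> l \in all_bits n.
Proof.
elim: n l => [|n IH] [|b l] //= [/IH sl].
by rewrite !mem_cat; case: b; rewrite map_f ?orbT.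
Qed.

Lemma set_of_bits_onto K : exists2 bs, bs \in all_bits 6 & set_of_bits bs = K.
Proof.
exists (mkseq (fun i => inord i \in K) 6); first by rewrite mem_all_bits ?size_mkseq.
by apply/setP => x; rewrite in_set_of_bits nth_mkseq ?ltn_ord // inord_val.
Qed.

Lemma set_of_bits_inj : {in all_bits 6 &, injective set_of_bits}.
Proof.
have sz : all (fun l => size l == 6) (all_bits 6) by [].
move=> x y /(allP sz) /eqP sx /(allP sz) /eqP sy /eqP.
rewrite eq_set_of_bits => /allP h; apply: (@eq_from_nth _ false); first by rewrite sx sy.
by move=> i; rewrite sx => lt6; apply/eqP/h; rewrite mem_iota.
Qed.

Arguments subset_bits bs cs /.
Arguments setD_bits cs bs /.
Arguments ninv_bits bs cs /.
Arguments eq_bits bs cs /.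

Section WedgeInCoordinates.
Variable R : numDomainType.
Implicit Types (phi psi : xform R).

(* A [bigop]-free sum, so that [simpl] expands it over an explicit list. *)
Fixpoint lsum (l : seq (seq bool)) (f : seq bool -> R) : R :=
  if l is x :: l' then f x + lsum l' f else 0.

Lemma lsumE l f : lsum l f = \sum_(x <- l) f x.
Proof. by elim: l => [|x l IH] /=; rewrite ?big_nil ?big_cons ?IH. Qed.

Lemma eq_lsum l f g : f =1 g -> lsum l f = lsum l g.
Proof. by move=> h; elim: l => //= x l ->; rewrite h. Qed.

Lemma sum_bits_of_card k (F : {set 'I_6} -> R) :
  (forall K : {set 'I_6}, #|K| != k -> F K = 0) ->
  \sum_K F K = lsum (bits_of_card k) (fun bs => F (set_of_bits bs)).
Proof.
move=> h; rewrite lsumE /bits_of_card big_filter.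
transitivity (\sum_(bs <- all_bits 6) F (set_of_bits bs)).
  rewrite -(big_map set_of_bits predT F); apply: perm_big; apply: uniq_perm.
  - exact: index_enum_uniq.
  - by rewrite map_inj_in_uniq //; exact: set_of_bits_inj.
  move=> K; rewrite mem_index_enum; symmetry; apply/mapP.
  by have [bs ? <-] := set_of_bits_onto K; exists bs.
rewrite [RHS]big_mkcond; apply: eq_bigr => bs _.
by case: eqP => // hc; rewrite h // card_set_of_bits; apply/eqP.
Qed.

Lemma wedge_set_of_bits k phi psi cs : is_kform k phi ->
  wedge phi psi (set_of_bits cs) = lsum (bits_of_card k) (fun bs =>
    if subset_bits bs cs then (-1) ^+ ninv_bits bs (setD_bits cs bs) * phi (set_of_bits bs)
      * psi (set_of_bits (setD_bits cs bs)) else 0).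
Proof.
move=> h; rewrite ffunE (@sum_bits_of_card k); last first.
  by move=> I nI; apply: big1 => J _; rewrite h // mulr0 mul0r; case: ifP.
apply: eq_lsum => bs; under eq_bigr => J _ do rewrite setU_disjoint_eq.
rewrite subset_set_of_bits; case: subset_bits; last by rewrite big1.
by rewrite -big_mkcond big_pred1_eq setD_set_of_bits wsignE ninv_set_of_bits.
Qed.

End WedgeInCoordinates.

(** * Reduction to the standard structure *)

Section StandardStructure.
Variable R : realFieldType.
Implicit Types (a : xform R).

Definition omega_std : xform R :=
  wedge (dx R [set i0]) (dx R [set i1]) + wedge (dx R [set i2]) (dx R [set i3])
  + wedge (dx R [set i4]) (dx R [set i5]).

Definition sqnorm_std (phi : xform R) : R := \sum_K phi K ^+ 2.

Lemma ext_map_ebasis (E : 'M[R]_6) i : E \in unitmx ->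
  ext_map (invmx E) (ebasis E i) = dx R [set i].
Proof.
move=> Eu; rewrite /ebasis ext_map_oneform -row_mul mulmxV // oneform_expand.
rewrite (bigD1 i) //= big1 ?addr0 ?mxE ?eqxx ?scale1f // => j ji.
by rewrite !mxE eq_sym (negbTE ji) scale0f.
Qed.

Lemma ext_map_su3_omega (E : 'M[R]_6) : E \in unitmx ->
  ext_map (invmx E) (su3_omega E) = omega_std.
Proof. by move=> Eu; rewrite !ext_mapD !ext_map_wedge !ext_map_ebasis. Qed.

Lemma omega_std_bits : omega_std =
  dx R (set_of_bits [:: true; true; false; false; false; false])
  + dx R (set_of_bits [:: false; false; true; true; false; false])
  + dx R (set_of_bits [:: false; false; false; false; true; true]).
Proof.
rewrite /omega_std !wedge_dx !disjoints1 !in_set1 /= !wsignE !ninv_set1 /= !expr0 !scale1f.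
by congr (dx R _ + dx R _ + dx R _); apply/setP => -[[|[|[|[|[|[|n]]]]]] ?]; rewrite !inE.
Qed.

Lemma omega_std_set_of_bits cs : omega_std (set_of_bits cs) =
  (eq_bits cs [:: true; true; false; false; false; false])%:R
  + (eq_bits cs [:: false; false; true; true; false; false])%:R
  + (eq_bits cs [:: false; false; false; false; true; true])%:R.
Proof. by rewrite omega_std_bits !ffunE !eq_set_of_bits. Qed.

Lemma kform_omega_std : is_kform 2 omega_std.
Proof.
have dx1 i : is_kform 1 (dx R [set i]) by have := @kform_dx R [set i]; rewrite cards1.
by do 2?apply: kform_add; apply: (kform_wedge (k := 1) (l := 1)).
Qed.

Lemma sqnorm_std_wedge_omega_std a : is_kform 2 a ->
  sqnorm_std a + sqnorm_std (scalef 2%:R^-1 (wedge (wedge omega_std omega_std) a))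
  = sqnorm_std (wedge a omega_std).
Proof.
move=> ka.
have kaw : is_kform 4 (wedge a omega_std) by exact: kform_wedge ka kform_omega_std.
have kww := kform_wedge kform_omega_std kform_omega_std.
have kwwa := kform_wedge kww ka.
rewrite /sqnorm_std (@sum_bits_of_card _ 2); last by move=> K nK; rewrite ka // expr0n.
rewrite (@sum_bits_of_card _ 4 (fun K => wedge a omega_std K ^+ 2)); last first.
  by move=> K nK; rewrite kaw // expr0n.
rewrite (@sum_bits_of_card _ 6); last by move=> K nK; rewrite scalefE kwwa // mulr0 expr0n.
rewrite /= !scalefE !(wedge_set_of_bits _ _ ka) !(wedge_set_of_bits _ _ kww) /=.
rewrite !(wedge_set_of_bits _ _ kform_omega_std) /= !omega_std_set_of_bits /=.
by field.
Qed.

Definition pair_bits (i j : nat) : seq bool := mkseq (fun k => (k == i) || (k == j)) 6.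

Definition pair_coef a (i j : nat) : R := a (set_of_bits (pair_bits i j)).

Lemma sqnorm_std_half_omega_sq_wedge a : is_kform 2 a ->
  sqnorm_std (scalef 2%:R^-1 (wedge (wedge omega_std omega_std) a))
  = (pair_coef a 0 1 + pair_coef a 2 3 + pair_coef a 4 5) ^+ 2.
Proof.
move=> ka; have kww := kform_wedge kform_omega_std kform_omega_std.
rewrite /sqnorm_std (@sum_bits_of_card _ 6); last first.
  by move=> K nK; rewrite scalefE (kform_wedge kww ka) // mulr0 expr0n.
rewrite /= scalefE (wedge_set_of_bits _ _ kww) /= !(wedge_set_of_bits _ _ kform_omega_std) /=.
by rewrite !omega_std_set_of_bits /pair_coef /pair_bits /=; field.
Qed.

Lemma sqr3_le_sqnorm_std a (K1 K2 K3 : {set 'I_6}) : K1 != K2 -> K1 != K3 -> K2 != K3 ->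
  a K1 ^+ 2 + a K2 ^+ 2 + a K3 ^+ 2 <= sqnorm_std a.
Proof.
move=> n12 n13 n23; rewrite /sqnorm_std (bigD1 K1) // (bigD1 K2) ?(eq_sym K2) //=.
rewrite (bigD1 K3) /=; last by rewrite ![K3 == _]eq_sym n13 n23.
rewrite !addrA lerDl; apply: sumr_ge0 => K _; exact: sqr_ge0.
Qed.

Lemma sqnorm_std_cube_le a : is_kform 2 a ->
  sqnorm_std (wedge a (wedge a a)) <= 6%:R * sqnorm_std a ^+ 3.
Proof.
move=> ka; have kaaa := kform_wedge ka (kform_wedge ka ka).
rewrite /sqnorm_std (@sum_bits_of_card _ 2 (fun K => a K ^+ 2)); last first.
  by move=> K nK; rewrite ka // expr0n.
rewrite (@sum_bits_of_card _ 6); last by move=> K nK; rewrite kaaa // expr0n.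
rewrite /= addr0 (wedge_set_of_bits _ _ ka) /= !(wedge_set_of_bits _ _ ka) /=.
apply: (@pfaffian6_bound _ (pair_coef a 0 1) (pair_coef a 0 2) (pair_coef a 0 3)
  (pair_coef a 0 4) (pair_coef a 0 5) (pair_coef a 1 2) (pair_coef a 1 3) (pair_coef a 1 4)
  (pair_coef a 1 5) (pair_coef a 2 3) (pair_coef a 2 4) (pair_coef a 2 5) (pair_coef a 3 4)
  (pair_coef a 3 5) (pair_coef a 4 5));
  by rewrite /pfaffian6 /pfaffian4 /pair_coef /pair_bits /=; ring.
Qed.

Lemma sqnorm_std_half_omega_sq_wedge_le a : is_kform 2 a ->
  sqnorm_std (scalef 2%:R^-1 (wedge (wedge omega_std omega_std) a)) <= 3%:R * sqnorm_std a.
Proof.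
move=> ka; rewrite sqnorm_std_half_omega_sq_wedge //.
apply: le_trans (sqr_add3_le _ _ _) _.
by rewrite ler_wpM2l // sqr3_le_sqnorm_std //; rewrite eq_set_of_bits.
Qed.

End StandardStructure.

Theorem lemma4p1 (R : realFieldType) (E : 'M[R]_6) (omega rho alpha : xform R) :
  su3_adapted E omega rho ->
  is_kform 2 alpha ->
  [/\ sqnorm E alpha + sqnorm E ([ffun K => (2%:R)^-1 * wedge (wedge omega omega) alpha K])
        = sqnorm E (wedge alpha omega),
      sqnorm E (wedge alpha omega) <= 4%:R * sqnorm E alpha
    & sqnorm E (wedge alpha (wedge alpha alpha)) <= 6%:R * (sqnorm E alpha) ^+ 3].
Proof.
move=> [Eu -> _] ka.
have ka_std := kform_ext_map (invmx E) ka.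
rewrite -[[ffun K => _]]/(scalef _ (wedge (wedge (su3_omega E) (su3_omega E)) alpha)).
rewrite /sqnorm /ecoords -!/(sqnorm_std _) ext_mapZ !ext_map_wedge ext_map_su3_omega //.
have identity := sqnorm_std_wedge_omega_std ka_std.
split=> //; last exact: sqnorm_std_cube_le.
by rewrite -identity; have := sqnorm_std_half_omega_sq_wedge_le ka_std; lra.
Qed.
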